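(* A fuzzy Archimedean Riesz space has the fuzzy countable sup property if and only if every fuzzy $\sigma$-ideal in it is a fuzzy band.
   Context: A fuzzy order on a real vector space $E$ is a map $\mu:E\times E\to[0,1]$ with $\mu(x,x)=1$; $\mu(x,y)+\mu(y,x)>1$ implies $x=y$; and $\mu(x,z)\ge\sup_{y}\min(\mu(x,y),\mu(y,z))$. Write $x\le y$ for $\mu(x,y)>\frac12$; upper bounds, suprema and infima are taken with respect to this relation. $(E,\mu)$ is a fuzzy ordered linear space if $\mu(x_1,x_2)>\frac12$ implies $\mu(x_1,x_2)\le\mu(x_1+x,x_2+x)$ for all $x$ and $\mu(x_1,x_2)\le\mu(\alpha x_1,\alpha x_2)$ for all $\alpha>0$; it is a fuzzy Riesz space if $x\vee y=\sup\{x,y\}$, $x\wedge y=\inf\{x,y\}$ exist for all $x,y$. $|x|=x\vee(-x)$. A fuzzy Riesz space is fuzzy Archimedean if for every nonzero $x$ with $0\le x$ the set $\{\lambda x:\lambda>0\}$ is not bounded above. It has the fuzzy countable sup property if whenever $\sup A$ exists for a subset $A$, there is an at most countable $B\subseteq A$ with $\sup B=\sup A$. A fuzzy ideal is a vector subspace $A$ such that $\mu(|x|,|y|)>\frac12$ and $y\in A$ imply $x\in A$; it is a fuzzy $\sigma$-ideal if $0\le x_n\in A$, $x_n\uparrow x$ (increasing with supremum $x$) imply $x\in A$; it is a fuzzy band if it contains the supremum of each of its subsets whose supremum exists in the space. *)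

From HB Require Import structures.
From mathcomp Require Import all_boot all_order all_algebra.
From mathcomp Require Import boolp classical_sets cardinality reals.
Set Implicit Arguments. Unset Strict Implicit. Unset Printing Implicit Defensive.
Import Order.TTheory GRing.Theory Num.Theory.
Local Open Scope ring_scope.
Local Open Scope classical_set_scope.

Section Fuzzy.
Variables (R : realType) (E : lmodType R).
Implicit Types (mu : E -> E -> R) (A B : set E) (x y z s u : E).

(* fuzzy order: values in [0,1]; reflexivity; antisymmetry; transitivity
   mu(x,z) >= sup_y min(mu(x,y),mu(y,z)), written pointwise in y. *)
Definition fuzzy_order mu : Prop :=
  [/\ (forall x y, 0 <= mu x y <= 1),
      (forall x, mu x x = 1),
      (forall x y, 1 < mu x y + mu y x -> x = y) &
      (forall x y z, Num.min (mu x y) (mu y z) <= mu x z)].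

Definition fle mu x y : Prop := 2^-1 < mu x y.

Definition fupper mu A u : Prop := forall a, A a -> fle mu a u.
Definition flower mu A u : Prop := forall a, A a -> fle mu u a.

Definition fis_sup mu A s : Prop :=
  fupper mu A s /\ forall u, fupper mu A u -> fle mu s u.
Definition fis_inf mu A s : Prop :=
  flower mu A s /\ forall u, flower mu A u -> fle mu u s.

Definition fuzzy_ordered_linear mu : Prop :=
  [/\ fuzzy_order mu,
      (forall x1 x2 x, 2^-1 < mu x1 x2 -> mu x1 x2 <= mu (x1 + x) (x2 + x)) &
      (forall x1 x2 (a : R), 2^-1 < mu x1 x2 -> 0 < a ->
          mu x1 x2 <= mu (a *: x1) (a *: x2))].

Definition fuzzy_riesz mu : Prop :=
  [/\ fuzzy_ordered_linear mu,
      (forall x y, exists s, fis_sup mu [set x; y] s) &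
      (forall x y, exists s, fis_inf mu [set x; y] s)].

Definition fis_abs mu x a : Prop := fis_sup mu [set x; - x] a.

Definition fuzzy_archimedean mu : Prop :=
  forall x, fle mu 0 x -> x <> 0 ->
    ~ (exists u, fupper mu [set l *: x | l in [set l : R | 0 < l]] u).

Definition fuzzy_countable_sup mu : Prop :=
  forall A s, fis_sup mu A s ->
    exists B, [/\ B `<=` A, countable B & fis_sup mu B s].

Definition subspace A : Prop :=
  [/\ A 0, (forall x y, A x -> A y -> A (x + y)) &
      (forall (a : R) x, A x -> A (a *: x))].

Definition fuzzy_ideal mu A : Prop :=
  subspace A /\
  forall x y ax ay, fis_abs mu x ax -> fis_abs mu y ay ->
    fle mu ax ay -> A y -> A x.

Definition fuzzy_sigma_ideal mu A : Prop :=
  fuzzy_ideal mu A /\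
  forall (xn : nat -> E) x,
    (forall n, fle mu 0 (xn n) /\ A (xn n)) ->
    (forall n, fle mu (xn n) (xn n.+1)) ->
    fis_sup mu (range xn) x -> A x.

Definition fuzzy_band mu A : Prop :=
  fuzzy_ideal mu A /\
  forall B s, B `<=` A -> fis_sup mu B s -> A s.

End Fuzzy.

(* (=>) A countable subset with the same supremum is the range of a sequence;
   its partial joins increase, lie in the sigma-ideal and have that supremum.
   (<=) Let s = sup A, a0 in A, 0 < eps <= 1 and x0 = eps (s - a0), so that
   x0 = sup_{a in A} (a - (s - x0))^+. By Zorn, take a maximal pairwise
   disjoint family D of nonzero positive elements, each below some
   (a - (s - x0))^+. The elements whose modulus is disjoint from all but
   countably many members of D form a sigma-ideal, hence a band; by maximality
   and the Archimedean property, its elements between 0 and x0 have supremum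
   x0, so x0 belongs to it and D must be countable. Choosing one such a per
   member of D gives a countable B included in A such that, for every upper
   bound w of B, (s - x0 - w)^+ is disjoint from x0, whence s - w <= x0.
   Taking eps = 1/(n+1) and the union over n concludes. *)
From mathcomp Require Import all_boot all_order all_algebra.
From mathcomp Require Import boolp classical_sets cardinality reals.
From mathcomp Require Import lra.
Set Implicit Arguments. Unset Strict Implicit. Unset Printing Implicit Defensive.
Import Order.TTheory GRing.Theory Num.Theory.
Local Open Scope ring_scope.
Local Open Scope classical_set_scope.

Lemma countableU (T : Type) (A B : set T) :
  countable A -> countable B -> countable (A `|` B).
Proof.
move=> cA cB.
have AB : A `|` B `<=` \bigcup_(i in [set: bool]) (if i then A else B).
  by move=> x [Ax|Bx]; [exists true|exists false].
apply: sub_countable (subset_card_le AB) _.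
by apply: bigcup_countable => // -[].
Qed.

Lemma countable_range (T : choiceType) (B : set T) (b0 : T) :
  B b0 -> countable B -> exists g : nat -> T, range g = B.
Proof.
move=> Bb0 /countable_injP[f finj].
pose g n := xget b0 [set y | B y /\ f y = n].
exists g; apply/seteqP; split => [_ [n _ <-]|y By].
  by rewrite /g; case: xgetP => [y _ []|].
exists (f y) => //; apply: xget_unique => // z [Bz fz].
by apply: finj; rewrite ?inE.
Qed.

Section FuzzyRiesz.
Variables (R : realType) (E : lmodType R) (mu : E -> E -> R).
Hypothesis mu_riesz : fuzzy_riesz mu.

Local Notation "x <=m y" := (fle mu x y) (at level 70).

Let mu_order : fuzzy_order mu.
Proof. by case: mu_riesz => -[]. Qed.

Lemma fle_refl x : x <=m x.
Proof. by case: mu_order => _ mu1 _ _; rewrite /fle mu1; lra. Qed.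

Lemma fle_trans y x z : x <=m y -> y <=m z -> x <=m z.
Proof.
case: mu_order => _ _ _ mu_trans; rewrite /fle => xy yz.
by apply: lt_le_trans (mu_trans x y z); rewrite lt_min xy yz.
Qed.

Lemma fle_anti x y : x <=m y -> y <=m x -> x = y.
Proof. by case: mu_order => _ _ mu_anti _; rewrite /fle => xy yx; apply: mu_anti; lra. Qed.

Lemma fleD2r x y z : (x + z <=m y + z) <-> (x <=m y).
Proof.
have fleD a b c : a <=m b -> a + c <=m b + c.
  by case: mu_riesz => -[_ muD _] _ _; rewrite /fle => ab; apply: lt_le_trans (muD _ _ c ab).
split; last exact: fleD.
by move=> /(fleD _ _ (- z)); rewrite !addrK.
Qed.

Lemma fleD2l x y z : (z + x <=m z + y) <-> (x <=m y).
Proof. by rewrite ![z + _]addrC fleD2r. Qed.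

Lemma subr_fge0 x y : (0 <=m y - x) <-> (x <=m y).
Proof. by rewrite -(fleD2r 0 (y - x) x) add0r subrK. Qed.

Lemma fleN2 x y : x <=m y -> - y <=m - x.
Proof. by move=> xy; rewrite -(fleD2r _ _ (x + y)) addKr addrCA addNr addr0. Qed.

Lemma fleD x y x' y' : x <=m y -> x' <=m y' -> x + x' <=m y + y'.
Proof. by move=> xy xy'; apply: (fle_trans (y := y + x')); rewrite ?fleD2r ?fleD2l. Qed.

Lemma fle_wpDl p x y : 0 <=m p -> x <=m y -> x <=m p + y.
Proof. by move=> p0 xy; rewrite -[x]add0r; apply: fleD. Qed.

Lemma fle_pZ2l (a : R) x y : 0 < a -> (a *: x <=m a *: y) <-> (x <=m y).
Proof.
have fleZ b u v : 0 < b -> u <=m v -> b *: u <=m b *: v.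
  case: mu_riesz => -[_ _ muZ] _ _; rewrite /fle => b0 uv.
  exact: lt_le_trans (muZ _ _ _ uv b0).
move=> a0; split; last exact: fleZ.
move=> /(fleZ a^-1); rewrite !scalerA mulVf ?gt_eqF // !scale1r; apply.
by rewrite invr_gt0.
Qed.

Lemma fscale_ge0 (a : R) x : 0 <= a -> 0 <=m x -> 0 <=m a *: x.
Proof.
rewrite le_eqVlt => /orP[/eqP <-|a0] x0; first by rewrite scale0r; apply: fle_refl.
by rewrite -(scaler0 _ a) fle_pZ2l.
Qed.

Lemma fis_sup_unique (X : set E) s t : fis_sup mu X s -> fis_sup mu X t -> s = t.
Proof. by move=> [Xs s_lub] [Xt t_lub]; apply: fle_anti; [apply: s_lub|apply: t_lub]. Qed.

Lemma fis_sup_set0 s : fis_sup mu set0 s -> s = 0.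
Proof.
move=> [_ s_lub]; apply: fle_anti; first exact: s_lub.
by rewrite -(fleD2r _ _ s) add0r; apply: s_lub.
Qed.

Definition fjoin x y := xget 0 (fis_sup mu [set x; y]).

Lemma fjoinP x y : fis_sup mu [set x; y] (fjoin x y).
Proof. by apply: xgetPex; case: mu_riesz => _ + _; apply. Qed.

Lemma fjoin_ubl x y : x <=m fjoin x y.
Proof. by case: (fjoinP x y) => ub _; apply: ub; left. Qed.

Lemma fjoin_ubr x y : y <=m fjoin x y.
Proof. by case: (fjoinP x y) => ub _; apply: ub; right. Qed.

Lemma fjoin_lub x y z : x <=m z -> y <=m z -> fjoin x y <=m z.
Proof. by case: (fjoinP x y) => _ lub xz yz; apply: lub => w [->|->]. Qed.

Lemma fjoin_eq x y z : x <=m z -> y <=m z ->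
  (forall u, x <=m u -> y <=m u -> z <=m u) -> fjoin x y = z.
Proof.
move=> xz yz z_lub; apply: fle_anti; first exact: fjoin_lub.
by apply: z_lub; [apply: fjoin_ubl|apply: fjoin_ubr].
Qed.

Lemma fjoinC x y : fjoin x y = fjoin y x.
Proof.
by apply: fjoin_eq => [||u ? ?]; [apply: fjoin_ubr|apply: fjoin_ubl|apply: fjoin_lub].
Qed.

Lemma fjoin_r x y : x <=m y -> fjoin x y = y.
Proof. by move=> xy; apply: fjoin_eq => //; apply: fle_refl. Qed.

Lemma fjoin_mono x x' y y' : x <=m x' -> y <=m y' -> fjoin x y <=m fjoin x' y'.
Proof.
move=> xx' yy'; apply: fjoin_lub.
  exact: fle_trans xx' (fjoin_ubl _ _).
exact: fle_trans yy' (fjoin_ubr _ _).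
Qed.

Lemma fjoinDr x y z : fjoin (x + z) (y + z) = fjoin x y + z.
Proof.
apply: fjoin_eq => [||u xu yu]; rewrite ?fleD2r; [exact: fjoin_ubl|exact: fjoin_ubr|].
rewrite -(addrNK z u) fleD2r.
by apply: fjoin_lub; rewrite -(fleD2r _ _ z) addrNK.
Qed.

Lemma fjoinZ (a : R) x y : 0 < a -> fjoin (a *: x) (a *: y) = a *: fjoin x y.
Proof.
move=> a0; apply: fjoin_eq => [||u xu yu]; rewrite ?fle_pZ2l //;
  [exact: fjoin_ubl|exact: fjoin_ubr|].
have -> : u = a *: (a^-1 *: u) by rewrite scalerA divff ?gt_eqF // scale1r.
rewrite fle_pZ2l //; apply: fjoin_lub;
  by rewrite -(fle_pZ2l _ _ a0) scalerA divff ?gt_eqF // scale1r.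
Qed.

Definition fmeet x y := - fjoin (- x) (- y).

Lemma fmeet_lbl x y : fmeet x y <=m x.
Proof. by rewrite /fmeet -{2}(opprK x); apply/fleN2/fjoin_ubl. Qed.

Lemma fmeet_lbr x y : fmeet x y <=m y.
Proof. by rewrite /fmeet -{2}(opprK y); apply/fleN2/fjoin_ubr. Qed.

Lemma fmeet_glb x y z : z <=m x -> z <=m y -> z <=m fmeet x y.
Proof. by move=> zx zy; rewrite /fmeet -(opprK z); apply/fleN2/fjoin_lub; apply: fleN2. Qed.

Lemma fmeetC x y : fmeet x y = fmeet y x.
Proof. by rewrite /fmeet fjoinC. Qed.

Lemma fmeet_l x y : x <=m y -> fmeet x y = x.
Proof.
move=> xy; apply: fle_anti; first exact: fmeet_lbl.
by apply: fmeet_glb => //; apply: fle_refl.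
Qed.

Lemma fmeet_mono x x' y y' : x <=m x' -> y <=m y' -> fmeet x y <=m fmeet x' y'.
Proof.
move=> xx' yy'; apply: fmeet_glb.
  exact: fle_trans (fmeet_lbl _ _) xx'.
exact: fle_trans (fmeet_lbr _ _) yy'.
Qed.

Lemma fmeetDr x y z : fmeet (x + z) (y + z) = fmeet x y + z.
Proof. by rewrite /fmeet !opprD fjoinDr opprD opprK. Qed.

Lemma fmeetZ (a : R) x y : 0 < a -> fmeet (a *: x) (a *: y) = a *: fmeet x y.
Proof. by move=> a0; rewrite /fmeet -!scalerN fjoinZ // scalerN. Qed.

Lemma fmeet_fjoin x y : fmeet x y + fjoin x y = x + y.
Proof.
have -> : fjoin x y = fjoin (- y) (- x) + (x + y).
  by rewrite -fjoinDr addKr [- y + _]addrC addrK.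
by rewrite /fmeet fjoinC addrA addNr add0r.
Qed.

Lemma fmeet_eq0_le x y x' y' : 0 <=m x' -> 0 <=m y' -> x' <=m x -> y' <=m y ->
  fmeet x y = 0 -> fmeet x' y' = 0.
Proof.
move=> x'0 y'0 x'x y'y xy0; apply: fle_anti; last exact: fmeet_glb.
by rewrite -xy0; apply: fmeet_mono.
Qed.

Lemma fmeetD_eq0 p q e : 0 <=m p -> 0 <=m q -> 0 <=m e ->
  fmeet p e = 0 -> fmeet q e = 0 -> fmeet (p + q) e = 0.
Proof.
move=> p0 q0 e0 pe0 qe0; have pqe_e := fmeet_lbr (p + q) e.
apply: fle_anti; last by apply: fmeet_glb => //; rewrite -(addr0 0); apply: fleD.
rewrite -(addr0 0) -{1}pe0 -qe0 -fmeetDr; apply: fmeet_glb.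
  rewrite [p + fmeet _ _]addrC -fmeetDr; apply: fmeet_glb.
    by rewrite [q + p]addrC; apply: fmeet_lbl.
  by rewrite [e + p]addrC; apply: fle_wpDl.
by rewrite [e + fmeet _ _]addrC -fmeetDr; apply: fmeet_glb; apply: fle_wpDl.
Qed.

Lemma fmeet_scale_eq0 (c : R) p e : 0 <= c -> 0 <=m p -> 0 <=m e ->
  fmeet p e = 0 -> fmeet (c *: p) e = 0.
Proof.
move=> c0 p0 e0 pe0; have c1 : 0 < c + 1 by rewrite ltr_wpDl.
apply: (@fmeet_eq0_le ((c + 1) *: p) ((c + 1) *: e)) => //.
- exact: fscale_ge0.
- by rewrite -subr_fge0 -scalerBl addrC addKr scale1r.
- by rewrite -subr_fge0 scalerDl scale1r addrK; apply: fscale_ge0.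
- by rewrite fmeetZ // pe0 scaler0.
Qed.

Definition fpos x := fjoin x 0.
Definition fabs x := fjoin x (- x).

Lemma fpos_ge0 x : 0 <=m fpos x.
Proof. exact: fjoin_ubr. Qed.

Lemma fpos_id x : 0 <=m x -> fpos x = x.
Proof. by move=> x0; rewrite /fpos fjoinC fjoin_r. Qed.

Lemma fposN x : fpos (- x) = fpos x - x.
Proof. by rewrite /fpos -fjoinDr add0r subrr fjoinC. Qed.

Lemma fmeet_fpos_fposN x : fmeet (fpos x) (fpos (- x)) = 0.
Proof.
rewrite fposN -{1}(add0r (fpos x)) [fpos x - x]addrC fmeetDr.
by rewrite /fmeet oppr0 opprK fjoinC addNr.
Qed.

Lemma fabs_ubl x : x <=m fabs x. Proof. exact: fjoin_ubl. Qed.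
Lemma fabs_ubr x : - x <=m fabs x. Proof. exact: fjoin_ubr. Qed.

Lemma fis_abs_fabs x : fis_abs mu x (fabs x).
Proof. exact: fjoinP. Qed.

Lemma fis_abs_eq x a : fis_abs mu x a -> a = fabs x.
Proof. by move/fis_sup_unique; apply; apply: fis_abs_fabs. Qed.

Lemma fabs_ge0 x : 0 <=m fabs x.
Proof.
rewrite -(fle_pZ2l _ _ (a := 2%:R)) ?ltr0n // scaler0 scaler_nat mulr2n -(subrr x).
by apply: fleD; [apply: fabs_ubl|apply: fabs_ubr].
Qed.

Lemma fabs_id x : 0 <=m x -> fabs x = x.
Proof.
move=> x0; rewrite /fabs fjoinC fjoin_r //.
by apply: (fle_trans _ x0); rewrite -oppr0; apply: fleN2.
Qed.

Lemma fabs0 : fabs 0 = 0.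
Proof. by apply: fabs_id; apply: fle_refl. Qed.

Lemma fabsN x : fabs (- x) = fabs x.
Proof. by rewrite /fabs opprK fjoinC. Qed.

Lemma fabsZ (a : R) x : fabs (a *: x) = `|a| *: fabs x.
Proof.
have fabsZ_pos b y : 0 < b -> fabs (b *: y) = b *: fabs y.
  by move=> b0; rewrite /fabs -fjoinZ // scalerN.
have [a0|a0|->] := ltgtP a 0; last by rewrite normr0 !scale0r fabs0.
  have -> : a *: x = (- a) *: (- x) by rewrite scalerN scaleNr opprK.
  by rewrite fabsZ_pos ?oppr_gt0 // fabsN ltr0_norm.
by rewrite gtr0_norm // fabsZ_pos.
Qed.

Lemma fabs_triangle x y : fabs (x + y) <=m fabs x + fabs y.
Proof.
apply: fjoin_lub; first by apply: fleD; apply: fabs_ubl.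
by rewrite opprD; apply: fleD; apply: fabs_ubr.
Qed.

Lemma fis_sup_shift (X : set E) s c :
  fis_sup mu X s -> fis_sup mu [set y + c | y in X] (s + c).
Proof.
move=> [ub lub]; split; first by move=> _ [y Xy <-]; rewrite fleD2r; apply: ub.
move=> u hu; rewrite -(addrNK c u) fleD2r; apply: lub => y Xy.
by rewrite -(fleD2r _ _ c) addrNK; apply: hu; exists y.
Qed.

Lemma fis_sup_fpos (X : set E) s : X !=set0 ->
  fis_sup mu X s -> fis_sup mu (fpos @` X) (fpos s).
Proof.
move=> [y0 Xy0] [ub lub]; split.
  by move=> _ [y Xy <-]; apply: fjoin_mono; [apply: ub|apply: fle_refl].
move=> u hu; apply: fjoin_lub.
  by apply: lub => y Xy; apply: fle_trans (fjoin_ubl _ _) (hu _ _); exists y.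
by apply: fle_trans (fjoin_ubr y0 _) (hu _ _); exists y0.
Qed.

Lemma fis_sup_fmeet (X : set E) s e :
  fis_sup mu X s -> fis_sup mu [set fmeet y e | y in X] (fmeet s e).
Proof.
move=> [ub lub]; split.
  by move=> _ [y Xy <-]; apply: fmeet_mono; [apply: ub|apply: fle_refl].
move=> w hw.
have meetE : fmeet s e = s + (e - fjoin s e).
  by rewrite addrA -(fmeet_fjoin s e) addrK.
rewrite meetE -(addrNK (e - fjoin s e) w) fleD2r opprB addrA.
apply: lub => y Xy; rewrite -(addrK e y) -(fmeet_fjoin y e) -!addrA.
apply: fleD; first by apply: hw; exists y.
by rewrite fleD2r; apply: fjoin_mono; [apply: ub|apply: fle_refl].
Qed.

Lemma fmeet_sup_eq0 (X : set E) s y : fis_sup mu X s -> 0 <=m s -> 0 <=m y ->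
  (forall x, X x -> fmeet y x = 0) -> fmeet y s = 0.
Proof.
move=> Xs s0 y0 yX; apply: fle_anti; last exact: fmeet_glb.
rewrite fmeetC; case: (fis_sup_fmeet y Xs) => _; apply => _ [x Xx <-].
by rewrite fmeetC yX //; apply: fle_refl.
Qed.

Lemma subspaceB (A : set E) x y : subspace A -> A x -> A y -> A (x - y).
Proof. by move=> [_ AD AZ] Ax Ay; apply: AD => //; rewrite -scaleN1r; apply: AZ. Qed.

Lemma fideal_fjoin (A : set E) x y : fuzzy_ideal mu A -> A x -> A y -> A (fjoin x y).
Proof.
move=> [A_sub A_solid] Ax Ay; have [_ AD _] := A_sub.
have -> : fjoin x y = fpos (x - y) + y by rewrite /fpos -fjoinDr subrK add0r.
apply: AD => //.
apply: (A_solid _ _ _ _ (fis_abs_fabs _) (fis_abs_fabs _) _ (subspaceB A_sub Ax Ay)).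
rewrite fabs_id; last exact: fpos_ge0.
by apply: fjoin_lub; [apply: fabs_ubl|apply: fabs_ge0].
Qed.

Fixpoint partial_join (g : nat -> E) n :=
  if n is m.+1 then fjoin (partial_join g m) (g m.+1) else g 0.

Lemma partial_join_incr g n : partial_join g n <=m partial_join g n.+1.
Proof. exact: fjoin_ubl. Qed.

Lemma le_partial_join g n : g n <=m partial_join g n.
Proof. by case: n => [|n]; [apply: fle_refl|apply: fjoin_ubr]. Qed.

Lemma partial_join0_le g n : partial_join g 0 <=m partial_join g n.
Proof.
elim: n => [|n IHn]; first exact: fle_refl.
exact: fle_trans IHn (partial_join_incr g n).
Qed.

Lemma fis_sup_partial_join g s :
  fis_sup mu (range g) s -> fis_sup mu (range (partial_join g)) s.
Proof.
move=> [ub lub]; split => [_ [n _ <-]|u hu].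
  elim: n => [|n IHn] /=; first by apply: ub; exists 0%N.
  by apply: fjoin_lub => //; apply: ub; exists n.+1.
apply: lub => _ [n _ <-]; apply: fle_trans (le_partial_join g n) _.
by apply: hu; exists n.
Qed.

Lemma fsigma_ideal_sup_seq (A : set E) (g : nat -> E) s :
  fuzzy_sigma_ideal mu A -> (forall n, A (g n)) -> fis_sup mu (range g) s -> A s.
Proof.
move=> [A_ideal A_sigma] Ag gs; have [A_sub _] := A_ideal; have [_ AD _] := A_sub.
pose c := partial_join g.
have cA n : A (c n).
  by elim: n => [|n IHn] /=; [apply: Ag|apply: fideal_fjoin A_ideal IHn (Ag _)].
rewrite -(subrK (c 0%N) s); apply: AD => //.
apply: (A_sigma (fun n => c n - c 0%N) (s - c 0%N)).
- by move=> n; split; [rewrite subr_fge0; apply: partial_join0_le|apply: subspaceB].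
- by move=> n; rewrite fleD2r; apply: partial_join_incr.
- have := fis_sup_shift (- c 0%N) (fis_sup_partial_join gs).
  by rewrite image_comp.
Qed.

Lemma countable_sup_sigma_ideal_band : fuzzy_countable_sup mu ->
  forall A : set E, fuzzy_sigma_ideal mu A -> fuzzy_band mu A.
Proof.
move=> csup A A_sigma; split => [|B s BA Bs]; first exact: A_sigma.1.
have [C [CB cC Cs]] := csup _ _ Bs.
have [[c0 Cc0]|/nonemptyPn C0] := pselect (C !=set0); last first.
  by rewrite C0 in Cs; rewrite (fis_sup_set0 Cs); case: A_sigma.1 => -[].
have [g gC] := countable_range Cc0 cC.
rewrite -gC in Cs; apply: fsigma_ideal_sup_seq A_sigma _ Cs => n.
by apply/BA/CB; rewrite -gC; exists n.
Qed.

Definition pairwise_fdisjoint (D : set E) :=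
  forall e e', D e -> D e' -> e <> e' -> fmeet e e' = 0.

Lemma maximal_disjoint_system (F : set E) : (forall f, F f -> 0 <=m f) ->
  exists D : set E,
    [/\ forall e, D e -> [/\ 0 <=m e, e <> 0 & exists2 f, F f & e <=m f],
        pairwise_fdisjoint D &
        forall y f, 0 <=m y -> (forall e, D e -> fmeet y e = 0) -> F f -> fmeet y f = 0].
Proof.
move=> F_ge0.
pose P D := (forall e, D e -> [/\ 0 <=m e, e <> 0 & exists2 f, F f & e <=m f])
  /\ pairwise_fdisjoint D.
have [D [[D_pos D_disj] D_max]] : exists D, P D /\ forall B, D `<` B -> ~ P B.
  apply: Zorn_bigcup => Fam FamP Fam_total; split.
    by move=> e [X FamX Xe]; apply: (FamP X FamX).1.
  move=> e e' [X FamX Xe] [Y FamY Ye]; case: (Fam_total X Y FamX FamY) => [XY|YX].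
    by apply: (FamP Y FamY).2 => //; apply: XY.
  by apply: (FamP X FamX).2 => //; apply: YX.
exists D; split => // y f y_ge0 yD Ff; apply: contrapT => z_neq0.
set z := fmeet y f in z_neq0.
have z_ge0 : 0 <=m z by apply: fmeet_glb => //; apply: F_ge0.
have zD e : D e -> fmeet e z = 0.
  move=> De; have [e_ge0 _ _] := D_pos e De.
  by rewrite fmeetC; apply: (fmeet_eq0_le z_ge0 e_ge0 (fmeet_lbl y f) (fle_refl e) (yD e De)).
apply: (D_max (D `|` [set z])).
  split => [e De|DzD]; first by left.
  apply: z_neq0; rewrite -(zD z (DzD z (or_intror erefl))) fmeet_l //.
  exact: fle_refl.
split => [e [De|->]|e e' [De|->] [De'|->] ne]; first exact: D_pos.
- by split => //; exists f => //; apply: fmeet_lbr.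
- exact: D_disj.
- exact: zD.
- by rewrite fmeetC; apply: zD.
- by [].
Qed.

Lemma disjoint_scale_eq0 (eps : R) z t : 0 < eps <= 1 -> 0 <=m z -> z <=m t ->
  fmeet z (eps *: t) = 0 -> z = 0.
Proof.
move=> /andP[eps_gt0 eps_le1] z_ge0 zt zt0.
suff : eps *: z = 0 by move/eqP; rewrite scaler_eq0 gt_eqF //= => /eqP.
apply: fle_anti; last by apply: fscale_ge0 => //; apply: ltW.
rewrite -zt0; apply: fmeet_glb; last by rewrite fle_pZ2l.
by rewrite -subr_fge0 -{1}(scale1r z) -scalerBl; apply: fscale_ge0; rewrite ?subr_ge0.
Qed.

Lemma fis_sup_fpos_shift (A : set E) s x0 : fis_sup mu A s -> A !=set0 ->
  0 <=m x0 -> fis_sup mu [set fpos (a - (s - x0)) | a in A] x0.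
Proof.
move=> As [a0 Aa0] x0_ge0.
have A_ne : [set a - (s - x0) | a in A] !=set0 by exists (a0 - (s - x0)), a0.
have := fis_sup_fpos A_ne (fis_sup_shift (- (s - x0)) As).
by rewrite image_comp subKr fpos_id.
Qed.

Lemma fmeet_fpos_sub_eq0 a w y e : a <=m w -> 0 <=m e -> e <=m fpos (a - y) ->
  fmeet (fpos (y - w)) e = 0.
Proof.
move=> aw e_ge0 e_le; rewrite fmeetC.
apply: (fmeet_eq0_le e_ge0 (fpos_ge0 _) e_le _ (fmeet_fpos_fposN (a - y))).
by rewrite opprB; apply: fjoin_mono (fle_refl 0); rewrite fleD2l; apply: fleN2.
Qed.

Lemma fle_sub_of_fmeet_eq0 (eps : R) s a0 w : 0 < eps <= 1 -> a0 <=m s -> a0 <=m w ->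
  fmeet (fpos (s - eps *: (s - a0) - w)) (eps *: (s - a0)) = 0 ->
  s - w <=m eps *: (s - a0).
Proof.
move=> eps01 a0s a0w disj; set x0 := eps *: (s - a0).
have /andP[eps_gt0 _] := eps01.
have x0_ge0 : 0 <=m x0 by apply: fscale_ge0; rewrite ?subr_fge0 ?ltW.
suff z0 : fpos (s - x0 - w) = 0.
  have : s - x0 - w <=m 0 by rewrite -z0; apply: fjoin_ubl.
  by rewrite addrAC -(fleD2r _ _ x0) subrK add0r.
apply: (disjoint_scale_eq0 eps01 (fpos_ge0 _) _ disj).
apply: fjoin_lub; last by rewrite subr_fge0.
apply: (fle_trans (y := s - w)); last by rewrite fleD2l; apply: fleN2.
by rewrite addrAC -subr_fge0 opprB addrCA subrr addr0.
Qed.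

Section Archimedean.
Hypothesis mu_archimedean : fuzzy_archimedean mu.
Hypothesis sigma_ideal_band :
  forall A : set E, fuzzy_sigma_ideal mu A -> fuzzy_band mu A.

Lemma archimedean_eq0 v t : 0 <=m v -> (forall n, n.+1%:R *: v <=m t) -> v = 0.
Proof.
move=> v_ge0 vt; apply: contrapT => v_neq0.
apply: (mu_archimedean v_ge0 v_neq0); exists t => _ [l l_gt0 <-].
apply: fle_trans (vt (Num.bound l)).
rewrite -subr_fge0 -scalerBl; apply: fscale_ge0 => //.
rewrite subr_ge0 ltW //; apply: lt_le_trans (archi_boundP (ltW l_gt0)) _.
by rewrite ler_nat.
Qed.

Lemma archimedean_le0 x t : 0 <=m t ->
  (forall n, x <=m n.+1%:R^-1 *: t) -> x <=m 0.
Proof.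
move=> t_ge0 xt; suff <- : fpos x = 0 by apply: fjoin_ubl.
apply: (archimedean_eq0 (fpos_ge0 x) (t := t)) => n.
rewrite /fpos -fjoinZ ?ltr0n // scaler0; apply: fjoin_lub => //.
rewrite -(fle_pZ2l _ _ (a := n.+1%:R^-1)) ?invr_gt0 ?ltr0n //.
by rewrite scalerA mulVf ?pnatr_eq0 // scale1r.
Qed.

Section CocountablyDisjoint.
Variable D : set E.
Hypothesis D_ge0 : forall e, D e -> 0 <=m e.

Definition cocountably_disjoint x :=
  exists C, countable C /\ forall e, D e -> ~ C e -> fmeet (fabs x) e = 0.

Lemma cocountably_disjoint_ideal : fuzzy_ideal mu cocountably_disjoint.
Proof.
split; first split.
- exists set0; split => // e De _; rewrite fabs0; apply: fmeet_l; exact: D_ge0.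
- move=> x y [Cx [cCx xCx]] [Cy [cCy yCy]]; exists (Cx `|` Cy).
  split => [|e De nC]; first exact: countableU.
  apply: (fmeet_eq0_le (fabs_ge0 _) (D_ge0 De) (fabs_triangle x y) (fle_refl e)).
  apply: fmeetD_eq0; [exact: fabs_ge0|exact: fabs_ge0|exact: D_ge0| |].
    by apply: xCx => // ?; apply: nC; left.
  by apply: yCy => // ?; apply: nC; right.
- move=> a x [C [cC xC]]; exists C; split => // e De nC.
  by rewrite fabsZ; apply: fmeet_scale_eq0; [|apply: fabs_ge0|apply: D_ge0|apply: xC].
move=> x y ax ay /fis_abs_eq -> /fis_abs_eq -> xy [C [cC yC]].
exists C; split => // e De nC.
exact: (fmeet_eq0_le (fabs_ge0 x) (D_ge0 De) xy (fle_refl e) (yC e De nC)).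
Qed.

Lemma cocountably_disjoint_sigma_ideal : fuzzy_sigma_ideal mu cocountably_disjoint.
Proof.
split => [|xn x xn_pos _ xn_x]; first exact: cocountably_disjoint_ideal.
have /choice[C CP] := fun n => (xn_pos n).2.
exists (\bigcup_(n in [set: nat]) C n); split => [|e De nC].
  by apply: bigcup_countable => // n _; case: (CP n).
have x_ge0 : 0 <=m x.
  by apply: fle_trans (xn_pos 0%N).1 _; apply: xn_x.1; exists 0%N.
rewrite fabs_id // fmeetC; apply: (fmeet_sup_eq0 xn_x x_ge0 (D_ge0 De)).
move=> _ [n _ <-]; rewrite fmeetC -(fabs_id (xn_pos n).1).
by case: (CP n) => _ -> // Cne; apply: nC; exists n.
Qed.

Variable x0 : E.
Hypotheses (x0_ge0 : 0 <=m x0) (D_disj : pairwise_fdisjoint D).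
Hypothesis D_max :
  forall y, 0 <=m y -> (forall e, D e -> fmeet y e = 0) -> fmeet y x0 = 0.

Lemma fis_sup_cocountably_disjoint :
  fis_sup mu [set y | [/\ cocountably_disjoint y, 0 <=m y & y <=m x0]] x0.
Proof.
have [[I0 _ IZ] _] := cocountably_disjoint_ideal.
split => [y [] //|w w_ub].
have m_ge0 : 0 <=m fmeet w x0.
  by apply: fmeet_glb => //; apply: w_ub; split => //; apply: fle_refl.
pose u := x0 - fmeet w x0.
have u_ge0 : 0 <=m u by rewrite subr_fge0; apply: fmeet_lbr.
have u_le : u <=m x0 by rewrite -subr_fge0 opprB addrC subrK.
suff u0 : u = 0 by move/eqP: u0; rewrite subr_eq0 => /eqP ->; apply: fmeet_lbl.
(* By maximality of D it suffices that c := u /\ e vanishes for e in D; as D is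
   disjoint, c lies in the ideal, so all its multiples stay below w /\ x0. *)
rewrite -(fmeet_l u_le); apply: D_max => // e De; set c := fmeet u e.
have c_ge0 : 0 <=m c by apply: fmeet_glb => //; apply: D_ge0.
have Ic : cocountably_disjoint c.
  exists [set e]; split => [|e' De' ne']; first exact: countable1.
  rewrite fabs_id //; apply: (fmeet_eq0_le c_ge0 (D_ge0 De') (fmeet_lbr u e) (fle_refl e')).
  by apply: D_disj => // ee'; apply: ne'.
have nc_le n : n%:R *: c <=m fmeet w x0.
  elim: n => [|n IHn]; first by rewrite scale0r.
  have ncx0 : n.+1%:R *: c <=m x0.
    rewrite -natr1 scalerDl scale1r -(subrK (fmeet w x0) x0) addrC.
    by apply: fleD => //; apply: fmeet_lbl.
  by apply: fmeet_glb => //; apply: w_ub; split => //; [apply: IZ|apply: fscale_ge0].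
by apply: (archimedean_eq0 c_ge0 (t := fmeet w x0)) => n; apply: nc_le.
Qed.

Lemma maximal_disjoint_countable :
  (forall e, D e -> e <> 0 /\ e <=m x0) -> countable D.
Proof.
move=> D_below.
have [C [cC x0C]] : cocountably_disjoint x0.
  apply: (sigma_ideal_band cocountably_disjoint_sigma_ideal).2 fis_sup_cocountably_disjoint.
  by move=> y [].
apply: sub_countable (subset_card_le _) cC => e De; apply: contrapT => nCe.
have [e_neq0 e_x0] := D_below e De.
by apply: e_neq0; rewrite -(x0C e De nCe) fabs_id // fmeetC fmeet_l.
Qed.

End CocountablyDisjoint.

Lemma countable_approx_sup (A : set E) s a0 (eps : R) :
  fis_sup mu A s -> A a0 -> 0 < eps <= 1 ->
  exists B, [/\ B `<=` A, countable B &
    forall w, fupper mu B w -> s - w <=m eps *: (s - a0)].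
Proof.
move=> As Aa0 eps01; have /andP[eps_gt0 _] := eps01.
have a0s : a0 <=m s by apply: As.1.
set x0 := eps *: (s - a0).
have x0_ge0 : 0 <=m x0 by apply: fscale_ge0; rewrite ?subr_fge0 ?ltW.
pose d a := fpos (a - (s - x0)).
have dA : fis_sup mu (d @` A) x0 by apply: fis_sup_fpos_shift => //; exists a0.
have d_ge0 f : (d @` A) f -> 0 <=m f by move=> [a _ <-]; apply: fpos_ge0.
have [D [D_pos D_disj D_max]] := maximal_disjoint_system d_ge0.
have D_ge0 e : D e -> 0 <=m e by case/D_pos.
have D_max_x0 y : 0 <=m y -> (forall e, D e -> fmeet y e = 0) -> fmeet y x0 = 0.
  by move=> y_ge0 yD; apply: (fmeet_sup_eq0 dA) => // f; apply: D_max.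
have cD : countable D.
  apply: (maximal_disjoint_countable D_ge0 x0_ge0 D_disj D_max_x0) => e De.
  have [_ e_neq0 [f Af ef]] := D_pos e De.
  by split => //; apply: fle_trans ef (dA.1 _ Af).
have /choice[ae aeP] : forall e, exists a, D e -> A a /\ e <=m d a.
  move=> e; have [De|nDe] := pselect (D e); last by exists a0.
  by have [_ _ [_ [a Aa <-] ea]] := D_pos e De; exists a.
exists ([set a0] `|` ae @` D); split.
- by move=> _ [->|[e De <-]] //; case: (aeP e De).
- by apply: countableU; [apply: countable1|apply: sub_countable (card_image_le ae D) cD].
move=> w w_ub; apply: fle_sub_of_fmeet_eq0 => //; first by apply: w_ub; left.
apply: D_max_x0 => [|e De]; first exact: fpos_ge0.
have [_ ea] := aeP e De; apply: (fmeet_fpos_sub_eq0 _ (D_ge0 e De) ea).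
by apply: w_ub; right; exists e.
Qed.

Lemma sigma_ideal_band_countable_sup : fuzzy_countable_sup mu.
Proof.
move=> A s As.
have [[a0 Aa0]|/nonemptyPn A0] := pselect (A !=set0); last first.
  by rewrite A0 in As *; exists set0; split.
have eps_n n : 0 < (n.+1%:R^-1 : R) <= 1 by rewrite invr_gt0 ltr0n invf_le1 ?ltr0n ?ler1n.
have /choice[B BP] := fun n => countable_approx_sup As Aa0 (eps_n n).
have BA n : B n `<=` A by case: (BP n).
exists (\bigcup_(n in [set: nat]) B n); split.
- by move=> x [n _ /BA].
- by apply: bigcup_countable => // n _; case: (BP n).
split=> [x [n _ /BA /As.1] //|w w_ub].
have : s - w <=m 0.
  apply: (archimedean_le0 (t := s - a0)); first by rewrite subr_fge0; apply: As.1.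
  by move=> n; case: (BP n) => _ _; apply => b Bb; apply: w_ub; exists n.
by rewrite -(fleD2r _ _ w) subrK add0r.
Qed.

End Archimedean.
End FuzzyRiesz.

Theorem theorem4p10 (R : realType) (E : lmodType R) (mu : E -> E -> R) :
  fuzzy_riesz mu -> fuzzy_archimedean mu ->
  (fuzzy_countable_sup mu <->
   (forall A : set E, fuzzy_sigma_ideal mu A -> fuzzy_band mu A)).
Proof.
move=> mu_riesz mu_archimedean; split.
  exact: countable_sup_sigma_ideal_band.
exact: sigma_ideal_band_countable_sup.
Qed.
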